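(* Let $\psi(\bm{x},\bm{y})$ be a quantifier-free Presburger formula where $\bm{x}$ is a vector of $n$ variables and $\bm{y}$ a vector of $m$ variables, and let $\varphi$ be the sentence $\forall\bm{x}\,\exists\bm{y}\colon\psi(\bm{x},\bm{y})$. Let $\kappa(\bm{x},z_1,z_2)$ be the existential formula $\exists\bm{y}\colon\psi(\bm{x},\bm{y})\vee z_1=z_2$, with free variables $\bm{x},z_1,z_2$. Then $\kappa$ is monadically decomposable if and only if $\varphi$ is true.
   Context: Presburger formulas are over $\langle\mathbb{Z};+,<,(\equiv_m)_m,0,1\rangle$ with atoms $\sum a_ix_i\le b$ and $\sum a_ix_i\equiv b\pmod m$; quantifier-free formulas are Boolean combinations of atoms. A Presburger formula is monadic if each of its atoms contains at most one variable; a formula is monadically decomposable if it is equivalent over $\mathbb{Z}$ to a monadic Presburger formula. *)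

From Stdlib Require Import ZArith List.
Import ListNotations.
Open Scope Z_scope.

Definition lterm := list (Z * nat).

Definition eval_lterm (env : nat -> Z) (t : lterm) : Z :=
  fold_right (fun p acc => fst p * env (snd p) + acc) 0 t.

Inductive atom : Type :=
| ALe (t : lterm) (b : Z)
| ACong (t : lterm) (b : Z) (m : Z).

Definition atom_vars (a : atom) : list nat :=
  match a with ALe t _ => map snd t | ACong t _ _ => map snd t end.

Definition sat_atom (env : nat -> Z) (a : atom) : Prop :=
  match a with
  | ALe t b => eval_lterm env t <= b
  | ACong t b m => (m | eval_lterm env t - b)%Z
  end.

Inductive formula : Type :=
| FAtom (a : atom)
| FNot (f : formula)
| FAnd (f g : formula)
| FOr (f g : formula)
| FEx (v : nat) (f : formula)
| FAll (v : nat) (f : formula).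

Definition upd (env : nat -> Z) (v : nat) (z : Z) : nat -> Z :=
  fun w => if Nat.eqb w v then z else env w.

Fixpoint sat (env : nat -> Z) (f : formula) : Prop :=
  match f with
  | FAtom a => sat_atom env a
  | FNot f => ~ sat env f
  | FAnd f g => sat env f /\ sat env g
  | FOr f g => sat env f \/ sat env g
  | FEx v f => exists z : Z, sat (upd env v z) f
  | FAll v f => forall z : Z, sat (upd env v z) f
  end.

Fixpoint qfree (f : formula) : Prop :=
  match f with
  | FAtom _ => True
  | FNot f => qfree f
  | FAnd f g | FOr f g => qfree f /\ qfree g
  | FEx _ _ | FAll _ _ => False
  end.

Fixpoint free_vars (f : formula) : list nat :=
  match f with
  | FAtom a => atom_vars a
  | FNot f => free_vars f
  | FAnd f g | FOr f g => free_vars f ++ free_vars g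
  | FEx v f | FAll v f => filter (fun w => negb (Nat.eqb w v)) (free_vars f)
  end.

Definition monadic_atom (a : atom) : Prop :=
  forall v w, In v (atom_vars a) -> In w (atom_vars a) -> v = w.

Fixpoint monadic (f : formula) : Prop :=
  match f with
  | FAtom a => monadic_atom a
  | FNot f => monadic f
  | FAnd f g | FOr f g => monadic f /\ monadic g
  | FEx _ f | FAll _ f => monadic f
  end.

Definition equiv (f g : formula) : Prop := forall env, sat env f <-> sat env g.

Definition monadically_decomposable (f : formula) : Prop :=
  exists g, monadic g /\ equiv f g.

Definition ex_block (vs : list nat) (f : formula) : formula := fold_right FEx f vs.
Definition all_block (vs : list nat) (f : formula) : formula := fold_right FAll f vs.

(* Variable convention: x = variables 0..n-1, y = n..n+m-1,
   z1 = n+m, z2 = n+m+1. *)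
Definition xvars (n : nat) : list nat := seq 0 n.
Definition yvars (n m : nat) : list nat := seq n m.

Definition eq_formula (u v : nat) : formula :=
  FAnd (FAtom (ALe [(1, u); (-1, v)] 0)) (FAtom (ALe [(1, v); (-1, u)] 0)).

Definition phi_sentence (n m : nat) (psi : formula) : formula :=
  all_block (xvars n) (ex_block (yvars n m) psi).

Definition kappa (n m : nat) (psi : formula) : formula :=
  FOr (ex_block (yvars n m) psi) (eq_formula (n + m)%nat (n + m + 1)%nat).

(* If phi holds, the left disjunct of kappa is valid, so kappa is equivalent
   to the monadic formula [0 <= 0].  Conversely, a monadic formula only sees
   each variable through a finite set of atoms [c * v <= b] and
   [c * v = b (mod m)], so it cannot distinguish two assignments whose values
   agree modulo some M and are either equal or both beyond some bound N.  If
   phi fails at some x, then kappa at x reduces to [z1 = z2], and the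
   assignments z1 = z2 = N + 1 and z1 = N + 1, z2 = N + 1 + M are such a pair
   on which kappa differs. *)
From Stdlib Require Import ZArith List Lia Classical.
Import ListNotations.
Open Scope Z_scope.

Lemma eval_lterm_ext e1 e2 t :
  (forall v, In v (map snd t) -> e1 v = e2 v) ->
  eval_lterm e1 t = eval_lterm e2 t.
Proof.
  induction t as [|[a v] t IH]; simpl; intros H; [reflexivity|].
  rewrite (H v), IH by auto; reflexivity.
Qed.

Lemma agree_upd (P : nat -> Prop) e1 e2 v z :
  (forall w, w <> v -> P w -> e1 w = e2 w) ->
  forall w, P w -> upd e1 v z w = upd e2 v z w.
Proof.
  intros H w Hw; unfold upd; destruct (Nat.eqb_spec w v); auto.
Qed.

Lemma sat_ext f : forall e1 e2,
  (forall v, In v (free_vars f) -> e1 v = e2 v) -> (sat e1 f <-> sat e2 f).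
Proof.
  induction f as [a|f IH|f IHf g IHg|f IHf g IHg|v f IH|v f IH];
    simpl; intros e1 e2 H.
  - destruct a; simpl in *; rewrite (eval_lterm_ext e1 e2) by auto; tauto.
  - rewrite (IH e1 e2) by auto; tauto.
  - rewrite (IHf e1 e2), (IHg e1 e2) by (intros; apply H, in_or_app; auto); tauto.
  - rewrite (IHf e1 e2), (IHg e1 e2) by (intros; apply H, in_or_app; auto); tauto.
  - assert (Hu : forall z, forall w, In w (free_vars f) ->
                   upd e1 v z w = upd e2 v z w).
    { intros z; apply agree_upd; intros w Hwv Hw; apply H, filter_In.
      split; [exact Hw|]; apply Bool.negb_true_iff, Nat.eqb_neq, Hwv. }
    split; intros [z Hz]; exists z; [apply (IH _ _ (Hu z)) | apply (IH _ _ (Hu z))];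
      exact Hz.
  - assert (Hu : forall z, forall w, In w (free_vars f) ->
                   upd e1 v z w = upd e2 v z w).
    { intros z; apply agree_upd; intros w Hwv Hw; apply H, filter_In.
      split; [exact Hw|]; apply Bool.negb_true_iff, Nat.eqb_neq, Hwv. }
    split; intros Hz z; [apply (IH _ _ (Hu z)) | apply (IH _ _ (Hu z))]; apply Hz.
Qed.

Lemma sat_upd_notin f e v z :
  ~ In v (free_vars f) -> (sat (upd e v z) f <-> sat e f).
Proof.
  intros Hv; apply sat_ext; intros w Hw; unfold upd.
  destruct (Nat.eqb_spec w v); [subst; contradiction | reflexivity].
Qed.

Lemma free_vars_ex_block vs f w :
  In w (free_vars (ex_block vs f)) -> In w (free_vars f) /\ ~ In w vs.
Proof.
  induction vs as [|v vs IH]; simpl; intros H; [tauto|].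
  apply filter_In in H as [H Hwv]; apply IH in H as [Hf Hvs].
  apply Bool.negb_true_iff, Nat.eqb_neq in Hwv.
  split; [exact Hf|]; intros [->|]; auto.
Qed.

Lemma sat_all_block_inst vs f : forall e e',
  sat e (all_block vs f) ->
  (forall w, In w (free_vars f) -> ~ In w vs -> e' w = e w) -> sat e' f.
Proof.
  induction vs as [|v vs IH]; simpl; intros e e' Hsat Hagree.
  - apply (sat_ext f e' e); [intros w Hw; apply Hagree|]; auto.
  - apply (IH _ _ (Hsat (e' v))); intros w Hw Hvs; unfold upd.
    destruct (Nat.eqb_spec w v) as [->|Hwv]; [reflexivity|].
    apply Hagree; [exact Hw|]; intros [->|]; auto.
Qed.

Lemma not_sat_all_block vs f e :
  ~ sat e (all_block vs f) -> exists e', ~ sat e' f.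
Proof.
  revert e; induction vs as [|v vs IH]; simpl; intros e H; [eauto|].
  apply not_all_ex_not in H as [z Hz]; eauto.
Qed.

Lemma sat_eq_formula e u v : sat e (eq_formula u v) <-> e u = e v.
Proof. cbn [sat sat_atom eq_formula eval_lterm fold_right fst snd]; lia. Qed.

Definition close (N M a b : Z) : Prop :=
  (M | a - b) /\ (a = b \/ (N < a /\ N < b)).

Definition env_close (N M : Z) (e1 e2 : nat -> Z) : Prop :=
  forall w, close N M (e1 w) (e2 w).

Definition respects_close (N M : Z) (f : formula) : Prop :=
  forall e1 e2, env_close N M e1 e2 -> (sat e1 f <-> sat e2 f).

Lemma close_refl N M a : close N M a a.
Proof. split; [rewrite Z.sub_diag; apply Z.divide_0_r | left; reflexivity]. Qed.

Lemma close_weaken N M N' M' a b :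
  N <= N' -> (M | M') -> close N' M' a b -> close N M a b.
Proof.
  intros HN HM [Hd Hab]; split; [eapply Z.divide_trans; eauto | lia].
Qed.

Lemma env_close_upd N M e1 e2 v a b :
  env_close N M e1 e2 -> close N M a b ->
  env_close N M (upd e1 v a) (upd e2 v b).
Proof. intros He Hab w; unfold upd; destruct (Nat.eqb w v); auto. Qed.

Definition coef_sum (t : lterm) : Z := fold_right (fun p acc => fst p + acc) 0 t.

Lemma eval_lterm_one_var t v :
  (forall w, In w (map snd t) -> w = v) ->
  forall e, eval_lterm e t = coef_sum t * e v.
Proof.
  induction t as [|[c w] t IH]; simpl; intros Hv e; [reflexivity|].
  rewrite (Hv w), IH by auto; ring.
Qed.

Lemma eval_lterm_single_var t :
  (forall v w, In v (map snd t) -> In w (map snd t) -> v = w) ->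
  exists v, forall e, eval_lterm e t = coef_sum t * e v.
Proof.
  destruct t as [|[a v] t]; intros Hone; [exists 0%nat; reflexivity|].
  exists v; apply eval_lterm_one_var; intros w Hw; apply Hone; simpl; auto.
Qed.

(* For [a], [b] both above [|b0|], [c * a <= b0] and [c * b <= b0] are
   decided by the sign of [c] alone. *)
Lemma respects_close_le c v b0 :
  respects_close (Z.abs b0) 1 (FAtom (ALe [(c, v)] b0)).
Proof.
  intros e1 e2 He; simpl.
  destruct (He v) as [_ [->|[H1 H2]]]; [tauto|].
  destruct (Z.lt_trichotomy c 0) as [Hc|[->|Hc]]; split; intros; nia.
Qed.

Lemma respects_close_eq c v b0 :
  respects_close (Z.abs b0) 1 (FAtom (ACong [(c, v)] b0 0)).
Proof.
  intros e1 e2 He; simpl.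
  destruct (He v) as [_ [->|[H1 H2]]]; [tauto|].
  destruct (Z.eq_dec c 0) as [->|Hc]; [simpl; tauto|].
  split; intros Hd; apply Z.divide_0_l in Hd; nia.
Qed.

Lemma respects_close_cong c v b0 m :
  respects_close 0 m (FAtom (ACong [(c, v)] b0 m)).
Proof.
  intros e1 e2 He; simpl.
  destruct (He v) as [Hd _].
  assert (Hdc : (m | c * e1 v + 0 - (c * e2 v + 0)))
    by (replace (c * e1 v + 0 - (c * e2 v + 0)) with (c * (e1 v - e2 v)) by ring;
        apply Z.divide_mul_r, Hd).
  split; intros H.
  - replace (c * e2 v + 0 - b0)
      with (c * e1 v + 0 - b0 - (c * e1 v + 0 - (c * e2 v + 0))) by ring.
    apply Z.divide_sub_r; assumption.
  - replace (c * e1 v + 0 - b0)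
      with (c * e2 v + 0 - b0 + (c * e1 v + 0 - (c * e2 v + 0))) by ring.
    apply Z.divide_add_r; assumption.
Qed.

(* A monadic atom is, semantically, an atom in the single-term list [(c, v)]. *)
Lemma respects_close_monadic_atom a :
  monadic_atom a -> exists N M, 0 < M /\ respects_close N M (FAtom a).
Proof.
  unfold monadic_atom; destruct a as [t b0 | t b0 m]; simpl; intros Hone;
    destruct (eval_lterm_single_var t Hone) as [v Hv];
    set (c := coef_sum t) in Hv.
  - exists (Z.abs b0), 1; split; [lia|]; intros e1 e2 He; simpl.
    rewrite !Hv; pose proof (respects_close_le c v b0 e1 e2 He); simpl in *.
    rewrite !Z.add_0_r in *; assumption.
  - destruct (Z.eq_dec m 0) as [->|Hm].
    + exists (Z.abs b0), 1; split; [lia|]; intros e1 e2 He; simpl.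
      rewrite !Hv; pose proof (respects_close_eq c v b0 e1 e2 He); simpl in *.
      rewrite !Z.add_0_r in *; assumption.
    + exists 0, (Z.abs m); split; [lia|]; intros e1 e2 He; simpl.
      assert (He' : env_close 0 m e1 e2).
      { intros w; apply (close_weaken 0 m 0 (Z.abs m)); [lia| |apply He].
        apply Z.divide_abs_r, Z.divide_refl. }
      rewrite !Hv; pose proof (respects_close_cong c v b0 m e1 e2 He'); simpl in *.
      rewrite !Z.add_0_r in *; assumption.
Qed.

Lemma respects_close_weaken N M N' M' f :
  N <= N' -> (M | M') -> respects_close N M f -> respects_close N' M' f.
Proof.
  intros HN HM Hf e1 e2 He; apply Hf; intros w.
  exact (close_weaken N M N' M' _ _ HN HM (He w)).
Qed.

Lemma respects_close_join N1 M1 N2 M2 f g :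
  respects_close N1 M1 f -> respects_close N2 M2 g ->
  respects_close (Z.max N1 N2) (M1 * M2) f /\
  respects_close (Z.max N1 N2) (M1 * M2) g.
Proof.
  intros Hf Hg; split.
  - apply (respects_close_weaken N1 M1); [lia | apply Z.divide_factor_l | exact Hf].
  - apply (respects_close_weaken N2 M2); [lia | apply Z.divide_factor_r | exact Hg].
Qed.

Lemma monadic_respects_close g :
  monadic g -> exists N M, 0 < M /\ respects_close N M g.
Proof.
  induction g as [a|g IH|g IHg h IHh|g IHg h IHh|v g IH|v g IH]; simpl; intros Hm.
  - exact (respects_close_monadic_atom a Hm).
  - destruct (IH Hm) as [N [M [HM Hg]]]; exists N, M; split; [exact HM|].
    intros e1 e2 He; simpl; rewrite (Hg e1 e2 He); tauto.
  - destruct Hm as [Hmg Hmh].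
    destruct (IHg Hmg) as [N1 [M1 [HM1 Hg]]], (IHh Hmh) as [N2 [M2 [HM2 Hh]]].
    destruct (respects_close_join _ _ _ _ _ _ Hg Hh) as [Hg' Hh'].
    exists (Z.max N1 N2), (M1 * M2); split; [nia|].
    intros e1 e2 He; simpl; rewrite (Hg' e1 e2 He), (Hh' e1 e2 He); tauto.
  - destruct Hm as [Hmg Hmh].
    destruct (IHg Hmg) as [N1 [M1 [HM1 Hg]]], (IHh Hmh) as [N2 [M2 [HM2 Hh]]].
    destruct (respects_close_join _ _ _ _ _ _ Hg Hh) as [Hg' Hh'].
    exists (Z.max N1 N2), (M1 * M2); split; [nia|].
    intros e1 e2 He; simpl; rewrite (Hg' e1 e2 He), (Hh' e1 e2 He); tauto.
  - destruct (IH Hm) as [N [M [HM Hg]]]; exists N, M; split; [exact HM|].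
    intros e1 e2 He; simpl.
    split; intros [z Hz]; exists z;
      [apply (Hg (upd e1 v z)) | apply (Hg _ (upd e2 v z))]; auto;
      apply env_close_upd; auto using close_refl.
  - destruct (IH Hm) as [N [M [HM Hg]]]; exists N, M; split; [exact HM|].
    intros e1 e2 He; simpl.
    split; intros Hz z;
      [apply (Hg (upd e1 v z)) | apply (Hg _ (upd e2 v z))]; auto;
      apply env_close_upd; auto using close_refl.
Qed.

Section Kappa.

Variables (n m : nat) (psi : formula).
Hypothesis psi_vars : forall v, In v (free_vars psi) -> (v < n + m)%nat.

Lemma free_vars_ex_y w :
  In w (free_vars (ex_block (yvars n m) psi)) -> (w < n)%nat.
Proof.
  intros Hw; apply free_vars_ex_block in Hw as [Hpsi Hy].
  apply psi_vars in Hpsi; unfold yvars in Hy; rewrite in_seq in Hy; lia.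
Qed.

Lemma ex_y_valid_of_phi :
  sat (fun _ => 0) (phi_sentence n m psi) ->
  forall e, sat e (ex_block (yvars n m) psi).
Proof.
  intros Hphi e; apply (sat_all_block_inst _ _ _ e Hphi).
  intros w Hw Hx; exfalso; apply Hx.
  unfold xvars; apply in_seq; apply free_vars_ex_y in Hw; lia.
Qed.

Lemma sat_kappa_at_z e a b :
  ~ sat e (ex_block (yvars n m) psi) ->
  (sat (upd (upd e (n + m) a) (n + m + 1) b) (kappa n m psi) <-> a = b).
Proof.
  intros Hne; unfold kappa; cbn [sat]; rewrite sat_eq_formula.
  assert (Hz : forall v, (n + m <= v)%nat ->
                 ~ In v (free_vars (ex_block (yvars n m) psi)))
    by (intros v Hv Hin; apply free_vars_ex_y in Hin; lia).
  rewrite !sat_upd_notin by (apply Hz; lia).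
  unfold upd; rewrite !Nat.eqb_refl.
  replace (Nat.eqb (n + m) (n + m + 1)) with false
    by (symmetry; apply Nat.eqb_neq; lia).
  tauto.
Qed.

Lemma kappa_not_decomposable_of_not_phi :
  ~ sat (fun _ => 0) (phi_sentence n m psi) ->
  ~ monadically_decomposable (kappa n m psi).
Proof.
  intros Hphi [g [Hg Hequiv]].
  destruct (not_sat_all_block _ _ _ Hphi) as [e Hne].
  destruct (monadic_respects_close g Hg) as [N [M [HM Hresp]]].
  set (e0 := upd e (n + m) (N + 1)).
  assert (Hclose : env_close N M (upd e0 (n + m + 1) (N + 1))
                                 (upd e0 (n + m + 1) (N + 1 + M))).
  { apply env_close_upd; [intros w; apply close_refl|]; split; [|right; lia].
    replace (N + 1 - (N + 1 + M)) with (- M) by ring.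
    apply Z.divide_opp_r, Z.divide_refl. }
  assert (Hsame : N + 1 = N + 1 + M).
  { apply (sat_kappa_at_z e _ _ Hne), Hequiv, (Hresp _ _ Hclose), Hequiv.
    apply (sat_kappa_at_z e _ _ Hne); reflexivity. }
  lia.
Qed.

End Kappa.

Theorem mainTheorem13 (n m : nat) (psi : formula) :
  qfree psi ->
  (forall v, In v (free_vars psi) -> (v < n + m)%nat) ->
  (monadically_decomposable (kappa n m psi) <->
   sat (fun _ => 0%Z) (phi_sentence n m psi)).
Proof.
  intros _ Hvars; split.
  - intros Hdec; apply NNPP; intros Hphi.
    exact (kappa_not_decomposable_of_not_phi n m psi Hvars Hphi Hdec).
  - intros Hphi; exists (FAtom (ALe [] 0)); split.
    + intros v w [].
    + intros e; simpl; split; [lia|].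
      intros _; left; exact (ex_y_valid_of_phi n m psi Hvars Hphi e).
Qed.
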